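(* Let $f:[a,b]\to\mathbb F$ and assume that $f^*:[a,b]\to\mathbb F$, $f^*(s)=f(s^* )$, is $g$-continuous on $[a,b]$. Then $f$ is $g$-continuous on $[a,b]$ if and only if $f(t)=f(s)$ for all $t,s\in[a,b]$ with $g(t)=g(s)$.
   Context: Let $g:\mathbb R\to\mathbb R$ be nondecreasing and left-continuous, $\mathbb F\in\{\mathbb R,\mathbb C\}$. $\Delta g(t)=g(t^+)-g(t)$, $D_g=\{t:\Delta g(t)>0\}$, $C_g=\{t: g\text{ constant on }(t-\varepsilon,t+\varepsilon)\text{ for some }\varepsilon>0\}=\bigcup_{n\in\Lambda}(a_n,b_n)$ (disjoint union of connected components), $N_g^-=\{a_n\}\setminus D_g$, $N_g^+=\{b_n\}\setminus D_g$. Fix $a<b$ with $a\notin N_g^-\cup D_g$, $b\notin D_g\cup C_g\cup N_g^+$. For $s\in[a,b]$, $s^*=s$ if $s\notin C_g$ and $s^*=b_n$ if $s\in(a_n,b_n)$. A function $u:D\subset\mathbb R\to\mathbb F$ is $g$-continuous at $t\in D$ if for every $\varepsilon>0$ there is $\delta>0$ with $|u(t)-u(s)|<\varepsilon$ for all $s\in D$ with $|g(t)-g(s)|<\delta$; it is $g$-continuous on $D$ if this holds at every $t\in D$. *)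

From Stdlib Require Import Reals ClassicalEpsilon.
From Coquelicot Require Import Coquelicot.
Open Scope R_scope.

Definition nondecreasing (g : R -> R) : Prop := forall x y, x <= y -> g x <= g y.

Definition left_continuous (g : R -> R) : Prop :=
  forall t, filterlim g (at_left t) (locally (g t)).

Definition Dg (g : R -> R) (t : R) : Prop :=
  exists l, filterlim g (at_right t) (locally l) /\ l - g t > 0.

Definition Cg (g : R -> R) (t : R) : Prop :=
  exists eps, 0 < eps /\
    forall x y, t - eps < x < t + eps -> t - eps < y < t + eps -> g x = g y.

(* c is the left endpoint a_n of a connected component (a_n, b_n) of C_g
   (b_n possibly +oo) *)
Definition left_end (g : R -> R) (c : R) : Prop :=
  exists d : Rbar, Rbar_lt c d /\ (forall x, Rbar_lt c x -> Rbar_lt x d -> Cg g x)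
    /\ ~ Cg g c /\ (forall r : R, d = Finite r -> ~ Cg g r).

(* c is the right endpoint b_n of a connected component (a_n, b_n) of C_g
   (a_n possibly -oo) *)
Definition right_end (g : R -> R) (c : R) : Prop :=
  exists d : Rbar, Rbar_lt d c /\ (forall x, Rbar_lt d x -> Rbar_lt x c -> Cg g x)
    /\ ~ Cg g c /\ (forall r : R, d = Finite r -> ~ Cg g r).

Definition Nminus (g : R -> R) (t : R) : Prop := left_end g t /\ ~ Dg g t.
Definition Nplus (g : R -> R) (t : R) : Prop := right_end g t /\ ~ Dg g t.

(* s^* = s if s ∉ C_g; s^* = b_n if s ∈ (a_n, b_n), where b_n is the supremum of
   the points x ≥ s such that [s, x] ⊆ C_g. *)
Definition star (g : R -> R) (s : R) : R :=
  match excluded_middle_informative (Cg g s) with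
  | left _ => real (Lub_Rbar (fun x => s <= x /\ forall y, s <= y <= x -> Cg g y))
  | right _ => s
  end.

Definition g_continuous_at {V : Type} (dist : V -> V -> R) (g : R -> R)
    (D : R -> Prop) (u : R -> V) (t : R) : Prop :=
  forall eps, 0 < eps -> exists delta, 0 < delta /\
    forall s, D s -> Rabs (g t - g s) < delta -> dist (u t) (u s) < eps.

Definition g_continuous {V : Type} (dist : V -> V -> R) (g : R -> R)
    (D : R -> Prop) (u : R -> V) : Prop :=
  forall t, D t -> g_continuous_at dist g D u t.

Definition Icc (a b : R) (x : R) : Prop := a <= x <= b.

Definition distR (x y : R) : R := Rabs (x - y).
Definition distC (x y : C) : R := Cmod (x - y).

(* For s in [a, b], g is constant on the interval from s up to s^* and left-continuous at s^*,
   so g takes the value g s at s^*; and s^* stays in [a, b] because b is not in C_g.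
   Hence, if f is constant on the level sets of g in [a, b], then f = f^* on [a, b], and the
   g-continuity of f^* is that of f.  Conversely, if f is g-continuous at t and g s = g t,
   then |f t - f s| < eps for every eps > 0. *)
From Stdlib Require Import Reals Lra Classical ClassicalEpsilon.
From Coquelicot Require Import Coquelicot.
Open Scope R_scope.

Section FiniteLub.

Variable E : R -> Prop.

Lemma Lub_Rbar_bounded (c x0 : R) :
  (forall x, E x -> x <= c) -> E x0 ->
  exists m, Lub_Rbar E = Finite m /\ x0 <= m <= c.
Proof.
  intros Hc Hx0. destruct (Lub_Rbar_correct E) as [Hub Hlub].
  assert (Hlow : Rbar_le x0 (Lub_Rbar E)) by (apply Hub; exact Hx0).
  assert (Hup : Rbar_le (Lub_Rbar E) c) by (apply Hlub; intros x Hx; apply Hc, Hx).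
  destruct (Lub_Rbar E) as [m| |]; simpl in *; try contradiction.
  exists m; auto.
Qed.

Lemma Lub_Rbar_finite_ub (m x : R) : Lub_Rbar E = Finite m -> E x -> x <= m.
Proof.
  intros Hm Hx. destruct (Lub_Rbar_correct E) as [Hub _].
  rewrite Hm in Hub. exact (Hub x Hx).
Qed.

Lemma Lub_Rbar_finite_approx (m y : R) :
  Lub_Rbar E = Finite m -> y < m -> exists x, E x /\ y < x.
Proof.
  intros Hm Hy. apply NNPP; intro Hnone.
  destruct (Lub_Rbar_correct E) as [_ Hlub]. rewrite Hm in Hlub.
  assert (Hmy : Rbar_le m y).
  { apply Hlub. intros x Hx. simpl. apply Rnot_lt_le.
    intro Hyx. apply Hnone. exists x; split; assumption. }
  simpl in Hmy; lra.
Qed.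

End FiniteLub.

(* Connectedness of [s, y]: since g is locally constant at each C_g-point, the supremum of the
   points where g still equals g s can be neither below y nor a point where g differs. *)
Lemma Cg_segment_const (g : R -> R) (s y : R) :
  s <= y -> (forall z, s <= z <= y -> Cg g z) -> g y = g s.
Proof.
  intros Hsy HC.
  set (F := fun x => s <= x <= y /\ g x = g s).
  destruct (Lub_Rbar_bounded F y s) as [m [Hm [Hsm Hmy]]].
  { intros x Hx; unfold F in Hx; lra. }
  { unfold F; split; [lra | reflexivity]. }
  destruct (HC m ltac:(lra)) as [eps [Heps Hconst]].
  assert (Hgm : g m = g s).
  { destruct (Lub_Rbar_finite_approx F m (m - eps) Hm ltac:(lra)) as [z [[Hz Hgz] Hzm]].
    assert (z <= m) by (apply (Lub_Rbar_finite_ub F); [exact Hm | split; assumption]).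
    rewrite <- Hgz; apply Hconst; lra. }
  destruct (Rle_lt_dec y m) as [Hym | Hmy'].
  - replace y with m by lra. exact Hgm.
  - exfalso. set (w := Rmin (m + eps / 2) y).
    assert (Hw : m < w <= m + eps / 2 /\ w <= y).
    { unfold w; split; [split |]; [apply Rmin_case; lra | apply Rmin_l | apply Rmin_r]. }
    assert (HFw : F w) by (split; [lra | rewrite <- Hgm; apply Hconst; lra]).
    pose proof (Lub_Rbar_finite_ub F m w Hm HFw). lra.
Qed.

Lemma left_continuous_const_before (g : R -> R) (s L : R) :
  left_continuous g -> s <= L -> (forall y, s <= y < L -> g y = g s) -> g L = g s.
Proof.
  intros Hlc HsL Hconst. destruct (Req_dec s L) as [<- | HsL']; [reflexivity |].
  assert (Hlim : filterlim g (at_left L) (locally (g s))).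
  { apply (filterlim_ext_loc (fun _ => g s)); [| apply filterlim_const].
    assert (Hd : 0 < L - s) by lra.
    exists (mkposreal _ Hd). intros y Hy HyL. simpl in Hy.
    change (Rabs (y - L) < L - s) in Hy. rewrite Rabs_left in Hy by lra.
    symmetry; apply Hconst; lra. }
  exact (filterlim_locally_unique g (g L) (g s) (Hlc L) Hlim).
Qed.

Lemma star_Cg (g : R -> R) (s b : R) :
  Cg g s -> ~ Cg g b -> s <= b ->
  s <= star g s <= b /\ forall y, s <= y < star g s -> g y = g s.
Proof.
  intros Hs Hb Hsb. unfold star.
  destruct (excluded_middle_informative (Cg g s)) as [_ | Hns]; [| contradiction].
  set (E := fun x => s <= x /\ forall y, s <= y <= x -> Cg g y).
  destruct (Lub_Rbar_bounded E b s) as [L [HL HsL]].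
  { intros x [Hsx HCx]. apply Rnot_lt_le. intro Hbx. apply Hb, HCx. lra. }
  { split; [lra |]. intros y Hy. replace y with s by lra. exact Hs. }
  rewrite HL; simpl. split; [exact HsL |].
  intros y Hy. destruct (Lub_Rbar_finite_approx E L y HL ltac:(lra)) as [x [[_ HCx] Hyx]].
  apply Cg_segment_const; [lra |]. intros z Hz. apply HCx. lra.
Qed.

Lemma star_spec (g : R -> R) (a b s : R) :
  left_continuous g -> ~ Cg g b -> a <= s <= b ->
  a <= star g s <= b /\ g (star g s) = g s.
Proof.
  intros Hlc Hb Hs.
  destruct (classic (Cg g s)) as [HCs | HCs].
  - destruct (star_Cg g s b HCs Hb ltac:(lra)) as [Hstar Hconst].
    split; [lra |]. apply left_continuous_const_before; [exact Hlc | lra | exact Hconst].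
  - unfold star. destruct (excluded_middle_informative (Cg g s)); [contradiction |].
    split; [exact Hs | reflexivity].
Qed.

Section LevelSets.

Context {V : Type} (dist : V -> V -> R).
Hypothesis dist_separates : forall x y : V, (forall eps, 0 < eps -> dist x y < eps) -> x = y.

Variables (g : R -> R) (f : R -> V).

Lemma g_continuous_at_level_set (D : R -> Prop) (t s : R) :
  g_continuous_at dist g D f t -> D s -> g t = g s -> f t = f s.
Proof.
  intros Hf Hs Hgts. apply dist_separates. intros eps Heps.
  destruct (Hf eps Heps) as [delta [Hdelta Hclose]]. apply Hclose; [exact Hs |].
  rewrite Hgts, Rminus_eq_0, Rabs_R0. exact Hdelta.
Qed.

Lemma g_continuous_iff_level_sets (a b : R) :
  left_continuous g -> ~ Cg g b ->
  g_continuous dist g (Icc a b) (fun s => f (star g s)) ->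
  (g_continuous dist g (Icc a b) f <->
   (forall t s, Icc a b t -> Icc a b s -> g t = g s -> f t = f s)).
Proof.
  intros Hlc Hb Hfstar. split.
  - intros Hf t s Ht Hs. apply (g_continuous_at_level_set (Icc a b)); [apply Hf, Ht | exact Hs].
  - intros Hlevel.
    assert (Hf_star : forall s, Icc a b s -> f s = f (star g s)).
    { intros s Hs. destruct (star_spec g a b s Hlc Hb Hs) as [Hstar Hgstar].
      apply Hlevel; [exact Hs | exact Hstar | symmetry; exact Hgstar]. }
    intros t Ht eps Heps. destruct (Hfstar t Ht eps Heps) as [delta [Hdelta Hclose]].
    exists delta; split; [exact Hdelta |].
    intros s Hs Hgs. rewrite (Hf_star t Ht), (Hf_star s Hs). exact (Hclose s Hs Hgs).
Qed.

End LevelSets.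

Lemma distR_separates (x y : R) : (forall eps, 0 < eps -> distR x y < eps) -> x = y.
Proof.
  unfold distR. intros Hsmall. apply NNPP; intro Hxy.
  assert (Hpos : 0 < Rabs (x - y)) by (apply Rabs_pos_lt; lra).
  specialize (Hsmall _ Hpos). lra.
Qed.

Lemma distC_separates (x y : C) : (forall eps, 0 < eps -> distC x y < eps) -> x = y.
Proof.
  unfold distC. intros Hsmall.
  assert (Hzero : Cmod (x - y) = 0).
  { pose proof (Cmod_ge_0 (x - y)) as Hnonneg.
    destruct (Rle_lt_or_eq_dec _ _ Hnonneg) as [Hpos | Hzero]; [| auto].
    specialize (Hsmall _ Hpos). lra. }
  apply Cmod_eq_0 in Hzero.
  replace x with ((x - y) + y)%C by ring. rewrite Hzero. ring.
Qed.

Theorem proposition5p3 (g : R -> R) (a b : R)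
  (g_nd : nondecreasing g) (g_lc : left_continuous g) (hab : a < b)
  (ha : ~ Nminus g a /\ ~ Dg g a)
  (hb : ~ Dg g b /\ ~ Cg g b /\ ~ Nplus g b) :
  (forall f : R -> R,
     g_continuous distR g (Icc a b) (fun s => f (star g s)) ->
     (g_continuous distR g (Icc a b) f <->
      (forall t s, Icc a b t -> Icc a b s -> g t = g s -> f t = f s)))
  /\
  (forall f : R -> C,
     g_continuous distC g (Icc a b) (fun s => f (star g s)) ->
     (g_continuous distC g (Icc a b) f <->
      (forall t s, Icc a b t -> Icc a b s -> g t = g s -> f t = f s))).
Proof.
  destruct hb as [_ [Hb _]]. split; intros f.
  - exact (g_continuous_iff_level_sets distR distR_separates g f a b g_lc Hb).
  - exact (g_continuous_iff_level_sets distC distC_separates g f a b g_lc Hb).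
Qed.
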